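(* Let $(G,H)$ be a strictly balanced rooted graph. Then: (i) There is a constant $\beta>0$ such that, for all $p=p(n)\in[0,1]$ with $p=O(n^{-1/d(G,H)+\beta})$, $$n^{\beta}\cdot\max_{G\subsetneq J\subsetneq H} n^{v_H-v_J}p^{e_H-e_J}\to 0 \quad (n\to\infty).$$ (ii) The graph $H-V(G)$, obtained from $H$ by deleting the vertices of $G$, is connected.
   Context: For a graph $F$, $v_F,e_F$ are its numbers of vertices and edges. A rooted graph $(G,H)$ consists of a graph $H$ and an induced subgraph $G\subseteq H$ (the root vertices), with $e_H>e_G$. For $G\subsetneq J\subseteq H$, $d(G,J)=(e_J-e_G)/(v_J-v_G)$. $(G,H)$ is strictly balanced if $d(G,J)<d(G,H)$ for all subgraphs $J$ with $G\subsetneq J\subsetneq H$. *)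

From mathcomp Require Import all_boot.
From Stdlib Require Import Reals.
Set Implicit Arguments. Unset Strict Implicit. Unset Printing Implicit Defensive.

(* A (finite simple) graph on ambient vertex type T: a vertex set together with
   a set of edges, each edge a 2-element subset of the vertex set. *)
Definition graph (T : finType) : Type := ({set T} * {set {set T}})%type.

Section Graphs.
Variable T : finType.
Implicit Types F G H J : graph T.

Definition verts F : {set T} := F.1.
Definition edges F : {set {set T}} := F.2.
Definition v_ F : nat := #|verts F|.
Definition e_ F : nat := #|edges F|.

Definition is_graph F : bool :=
  [forall x in edges F, (#|x| == 2) && (x \subset verts F)].

Definition subgraph F H : bool :=
  is_graph F && (verts F \subset verts H) && (edges F \subset edges H).

Definition induced_subgraph G H : bool :=
  (verts G \subset verts H) &&
  (edges G == [set x in edges H | x \subset verts G]).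

Definition rooted_graph G H : Prop :=
  is_graph H /\ is_graph G /\ induced_subgraph G H /\ (e_ G < e_ H)%N.

Definition dens G J : R :=
  ((INR (e_ J) - INR (e_ G)) / (INR (v_ J) - INR (v_ G)))%R.

Definition strictly_between G J H : bool :=
  subgraph J H && subgraph G J && (J != G) && (J != H).

Definition strictly_balanced G H : Prop :=
  forall J : graph T, strictly_between G J H -> (dens G J < dens G H)%R.

Definition delete_verts H (S : {set T}) : graph T :=
  (verts H :\: S, [set x in edges H | [disjoint x & S]]).

Definition adj F : rel T :=
  fun x y => (x \in verts F) && (y \in verts F) && ([set x; y] \in edges F).

Definition connected_graph F : Prop :=
  verts F != set0 /\
  forall x y, x \in verts F -> y \in verts F -> connect (adj F) x y.
End Graphs.

Definition bigO (p f : nat -> R) : Prop :=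
  exists C : R, exists N : nat, forall n : nat, (N <= n)%N -> (Rabs (p n) <= C * f n)%R.

(* Part (i): for J strictly between G and H, strict balance is the strict
   inequality (e_J - e_G)(v_H - v_G) < (e_H - e_G)(v_J - v_G) between integers,
   so it holds with a gap of at least 1.  Rewritten for the complementary
   extension this says (v_H - v_J) - (e_H - e_J)/d <= -1/(e_H - e_G), so once
   p <= C n^(-1/d + beta) every term n^(v_H - v_J) p^(e_H - e_J) is
   O(n^(-1/(e_H - e_G) + (1 + e_H) beta)); any beta <= 1/(2 (e_H - e_G)(1 + e_H))
   leaves a negative power of n, uniformly over the finitely many J.
   Part (ii): if H - V(G) had a component A with a nonempty rest B, the graphs
   induced on V(G) + A and V(G) + B would lie strictly between G and H, and
   their vertex and edge counts over G add up to those of H.  Then d(G,H) is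
   the mediant of two strictly smaller densities, which is absurd. *)

From mathcomp Require Import all_boot zify.
From Stdlib Require Import Reals Lra Lia.
Set Implicit Arguments. Unset Strict Implicit. Unset Printing Implicit Defensive.

Lemma mediant_lt_both_false (x1 x2 y1 y2 : nat) :
  x1 * (y1 + y2) < (x1 + x2) * y1 -> x2 * (y1 + y2) < (x1 + x2) * y2 -> False.
Proof. by nia. Qed.

Section Graphs.
Variable T : finType.
Implicit Types (G H J : graph T) (S : {set T}).

Definition induced_on H S : graph T := (S, [set e in edges H | e \subset S]).

Lemma induced_subgraph_edges G H :
  induced_subgraph G H -> edges G = [set e in edges H | e \subset verts G].
Proof. by case/andP=> _ /eqP. Qed.

Lemma is_graph_edge_subset H e : is_graph H -> e \in edges H -> e \subset verts H.
Proof. by move/forallP/(_ e)/implyP => h /h /andP[]. Qed.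

Lemma is_graph_edge_card H e : is_graph H -> e \in edges H -> #|e| = 2.
Proof. by move/forallP/(_ e)/implyP => h /h /andP[/eqP]. Qed.

Lemma subgraph_refl H : is_graph H -> subgraph H H.
Proof. by rewrite /subgraph => ->; rewrite !subxx. Qed.

Lemma induced_subgraph_subgraph G H :
  is_graph G -> induced_subgraph G H -> subgraph G H.
Proof.
move=> gG iGH; rewrite /subgraph gG; case/andP: (iGH) => -> _ /=.
by rewrite (induced_subgraph_edges iGH); apply/subsetP => e; rewrite inE => /andP[].
Qed.

Lemma subgraph_card G J : subgraph G J -> (v_ G <= v_ J) && (e_ G <= e_ J).
Proof. by case/andP=> /andP[_ sV] sE; rewrite !subset_leq_card. Qed.

Lemma induced_subgraph_card_eq G J H :
  induced_subgraph G H -> subgraph J H -> subgraph G J -> v_ J <= v_ G -> J = G.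
Proof.
move=> iGH /andP[/andP[gJ _] sJH] /andP[/andP[_ sGJ] sEGJ] leJG.
have eV : verts G = verts J by apply/eqP; rewrite eqEcard sGJ.
have eE : edges G = edges J.
  apply/eqP; rewrite eqEsubset sEGJ (induced_subgraph_edges iGH) eV.
  by apply/subsetP => e eJ; rewrite inE (subsetP sJH _ eJ) (is_graph_edge_subset gJ eJ).
by move: eV eE; case: J G {iGH sJH sGJ sEGJ leJG gJ} => VJ EJ [VG EG] /= -> ->.
Qed.

Lemma strictly_between_verts_lt G J H :
  induced_subgraph G H -> strictly_between G J H -> v_ G < v_ J.
Proof.
move=> iGH /andP[/andP[/andP[sJH sGJ] nJG] _]; rewrite ltnNge.
by apply: contra nJG => /(induced_subgraph_card_eq iGH sJH sGJ) ->.
Qed.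

Lemma rooted_graph_verts_lt G H : rooted_graph G H -> v_ G < v_ H.
Proof.
case=> gH [gG [iGH ltE]]; rewrite ltnNge; apply/negP => leHG.
have eHG := induced_subgraph_card_eq iGH (subgraph_refl gH)
              (induced_subgraph_subgraph gG iGH) leHG.
by move: ltE; rewrite eHG ltnn.
Qed.

Lemma strictly_between_card G J H : strictly_between G J H ->
  [/\ v_ G <= v_ J, v_ J <= v_ H, e_ G <= e_ J & e_ J <= e_ H].
Proof.
case/andP=> /andP[/andP[sJH sGJ] _] _.
by case/andP: (subgraph_card sGJ) => -> ->; case/andP: (subgraph_card sJH) => -> ->.
Qed.

Lemma induced_on_strictly_between G H S :
  is_graph H -> is_graph G -> induced_subgraph G H ->
  verts G \subset S -> S \subset verts H -> S != verts G -> S != verts H ->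
  strictly_between G (induced_on H S) H.
Proof.
move=> gH gG iGH sGS sSH nSG nSH.
have sub_SH : subgraph (induced_on H S) H.
  rewrite /subgraph /= sSH andbT; apply/andP; split; last first.
    by apply/subsetP => e; rewrite inE => /andP[].
  apply/forallP => e; apply/implyP; rewrite inE => /andP[eH ->].
  by rewrite (is_graph_edge_card gH eH).
have sub_GS : subgraph G (induced_on H S).
  rewrite /subgraph gG (induced_subgraph_edges iGH) /= sGS.
  by apply/subsetP => e; rewrite !inE => /andP[-> /subset_trans->].
rewrite /strictly_between sub_SH sub_GS /=.
by apply/andP; split; [move: nSG | move: nSH]; apply: contra_neq => <-.
Qed.

Lemma induced_on_edgesI H S1 S2 :
  edges (induced_on H S1) :&: edges (induced_on H S2) = edges (induced_on H (S1 :&: S2)).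
Proof. by apply/setP => e; rewrite !inE subsetI andbACA andbb. Qed.

Lemma delete_verts_closed_split H S (A : {set T}) : is_graph H ->
  (forall u w, adj (delete_verts H S) u w -> (u \in A) = (w \in A)) ->
  forall e, e \in edges H ->
  (e \subset S :|: A) || (e \subset S :|: (verts (delete_verts H S) :\: A)).
Proof.
move=> gH adjA e eH; set F := delete_verts H S.
have inF z : (z \in verts F) = (z \notin S) && (z \in verts H) by rewrite inE.
have /cards2P[u [w [_ ee]]] : #|e| == 2 by rewrite (is_graph_edge_card gH eH).
have := is_graph_edge_subset gH eH; rewrite ee subUset !sub1set => /andP[uH wH].
have inB z : z \in verts H -> (z \in S :|: verts F :\: A) = (z \in S) || (z \notin A).
  by move=> zH; rewrite in_setU in_setD inF zH; case: (z \in S); rewrite ?andbT.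
have sameA : (u \notin S) && (w \notin S) -> (u \in A) = (w \in A).
  case/andP=> uS wS; apply: adjA.
  rewrite /adj !inF uS wS uH wH -ee inE eH disjoints_subset ee subUset !sub1set.
  by rewrite !inE uS wS.
rewrite !subUset !sub1set !inB // !in_setU.
by move: sameA; case: (u \in S); case: (w \in S);
   case: (u \in A); case: (w \in A) => //= /(_ isT).
Qed.

End Graphs.

Lemma INR_subn m n : n <= m -> INR (m - n) = (INR m - INR n)%R.
Proof. by move=> lenm; rewrite -{2}(subnK lenm) plus_INR; ring. Qed.

Lemma INR_subn_gt0 m n : m < n -> (0 < INR (n - m))%R.
Proof. by move=> ltmn; apply/lt_0_INR/ltP; rewrite subn_gt0. Qed.

Lemma Rdiv_lt_cross (a p b q : R) :
  (0 < p -> 0 < q -> a / p < b / q -> a * q < b * p)%R.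
Proof.
move=> p0 q0 lt_ab.
have := Rmult_lt_compat_r (p * q) _ _ (Rmult_lt_0_compat _ _ p0 q0) lt_ab.
by replace (a / p * (p * q))%R with (a * q)%R by (field; lra);
   replace (b / q * (p * q))%R with (b * p)%R by (field; lra).
Qed.

Lemma Un_cv_Rpower_opp (delta : R) : (0 < delta)%R ->
  Un_cv (fun n => Rpower (INR n) (- delta)) 0.
Proof.
move=> delta0 eps eps0.
have [N ltMN] := INR_unbounded (Rpower (/ eps) (/ delta)).
exists N => n /le_INR leNn.
have M0 : (0 < Rpower (/ eps) (/ delta))%R by apply: exp_pos.
have pow_gt : (/ eps < Rpower (INR n) delta)%R.
  have inv_delta : (/ delta * delta = 1)%R by field; lra.
  rewrite -[X in (X < _)%R](Rpower_1 _ (Rinv_0_lt_compat _ eps0)) -inv_delta.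
  rewrite -Rpower_mult.
  by apply: Rlt_Rpower_l => //; lra.
have pow0 : (0 < Rpower (INR n) delta)%R by apply: exp_pos.
rewrite /Rdist Rminus_0_r Rabs_pos_eq Rpower_Ropp; last first.
  by left; apply: Rinv_0_lt_compat.
rewrite -(Rinv_inv eps); apply: Rinv_lt_contravar => //.
by apply: Rmult_lt_0_compat => //; apply: Rinv_0_lt_compat.
Qed.

Lemma Un_cv_scal0 (K : R) (u : nat -> R) :
  Un_cv u 0 -> Un_cv (fun n => K * u n)%R 0.
Proof.
move=> cvu; rewrite -(Rmult_0_r K); apply: CV_mult cvu => eps eps0.
by exists 0%N => n _; rewrite /Rdist Rminus_diag Rabs_R0.
Qed.

Lemma Un_cv_squeeze0 (u v : nat -> R) (N : nat) :
  (forall n, N <= n -> (0 <= u n <= v n)%R) -> Un_cv v 0 -> Un_cv u 0.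
Proof.
move=> uv cvv eps eps0; have [N' hN'] := cvv eps eps0.
exists (maxn N N') => n le_n.
have [u0 le_uv] := uv n (leq_trans (leq_maxl N N') (introT leP le_n)).
have := hN' n ltac:(lia); rewrite /Rdist !Rminus_0_r !Rabs_pos_eq //; lra.
Qed.

Lemma bigRmax_ge0 (I : finType) (P : pred I) (F : I -> R) :
  (forall i, P i -> 0 <= F i)%R -> (0 <= \big[Rmax/0%R]_(i | P i) F i)%R.
Proof.
move=> F0; apply: (big_ind (fun x => 0 <= x)%R) => //; first exact: Rle_refl.
by move=> x y x0 y0; apply: Rmax_case.
Qed.

Lemma Rmult_bigRmax_le (I : finType) (P : pred I) (F : I -> R) (c B : R) :
  (0 <= B)%R -> (forall i, P i -> c * F i <= B)%R ->
  (c * \big[Rmax/0%R]_(i | P i) F i <= B)%R.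
Proof.
move=> B0 cFB; apply: (big_ind (fun x => c * x <= B)%R) => //.
  by rewrite Rmult_0_r.
by move=> x y cx cy; apply: (Rmax_case x y (fun z => c * z <= B)%R).
Qed.

Lemma Rpower_monomial_le (x q C c beta delta : R) (a b m : nat) :
  (1 <= x)%R -> (0 <= q <= C * Rpower x c)%R -> b <= m ->
  (beta + INR a + INR b * c <= - delta)%R ->
  (Rpower x beta * (x ^ a * q ^ b) <= Rmax 1 C ^ m * Rpower x (- delta))%R.
Proof.
move=> x1 [q0 qC] le_bm expo.
have x0 : (0 < x)%R by lra.
have xc0 : (0 < Rpower x c)%R by apply: exp_pos.
have C0 : (0 <= C)%R by nra.
have qb : (q ^ b <= C ^ b * Rpower x (INR b * c))%R.
  rewrite [(INR b * c)%R]Rmult_comm -Rpower_mult (@Rpower_pow _ _ xc0) -Rpow_mult_distr.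
  by apply: pow_incr; lra.
have Cb : (C ^ b <= Rmax 1 C ^ m)%R.
  apply: (Rle_trans _ (Rmax 1 C ^ b)); last exact/Rle_pow/leP/le_bm/Rmax_l.
  by apply: pow_incr; split; [lra | apply: Rmax_r].
rewrite -(@Rpower_pow a _ x0).
apply: (Rle_trans _ (C ^ b * Rpower x (beta + INR a + INR b * c))).
  have -> : (C ^ b * Rpower x (beta + INR a + INR b * c)
            = Rpower x beta * (Rpower x (INR a) * (C ^ b * Rpower x (INR b * c))))%R.
    by rewrite !Rpower_plus; ring.
  do 2 (apply: Rmult_le_compat_l; first by left; apply: exp_pos).
  exact: qb.
apply: Rmult_le_compat => //; first exact: pow_le.
- by left; apply: exp_pos.
- by apply: Rle_Rpower.
Qed.

(* Used with (a, b, m, x, y) = (v_H - v_J, e_H - e_J, e_H, e_H - e_G, v_H - v_G). *)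
Lemma exponent_le (a b m x y : nat) :
  0 < x -> 0 < y -> b <= m -> a * x < b * y ->
  (/ (2 * INR x * (1 + INR m)) + INR a
     + INR b * (- / (INR x / INR y) + / (2 * INR x * (1 + INR m)))
   <= - / (2 * INR x))%R.
Proof.
move=> /ltP/lt_0_INR x0 /ltP/lt_0_INR y0 /leP/le_INR le_bm /leP/le_INR.
rewrite S_INR !mult_INR => gap.
have b0 := pos_INR b.
have margin : (/ (2 * INR x * (1 + INR m)) * (1 + INR b) <= / (2 * INR x))%R.
  apply: (Rle_trans _ (/ (2 * INR x * (1 + INR m)) * (1 + INR m))).
    by apply: Rmult_le_compat_l; [left; apply: Rinv_0_lt_compat; nra | lra].
  by right; field; lra.
have main : (INR a + INR b * (- / (INR x / INR y)) <= - / INR x)%R.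
  have -> : (INR a + INR b * (- / (INR x / INR y))
             = (INR a * INR x - INR b * INR y) * / INR x)%R by field; lra.
  have -> : (- / INR x = -1 * / INR x)%R by ring.
  by apply: Rmult_le_compat_r; [left; apply: Rinv_0_lt_compat | lra].
have -> : (- / (2 * INR x) = / (2 * INR x) - / INR x)%R by field; lra.
lra.
Qed.

Definition balance_slack (T : finType) (G H : graph T) : R :=
  / (2 * INR (e_ H - e_ G) * (1 + INR (e_ H))).

Section StrictlyBalanced.
Variables (T : finType) (G H : graph T).
Hypotheses (rGH : rooted_graph G H) (sbGH : strictly_balanced G H).

Lemma strictly_balanced_ltn J : strictly_between G J H ->
  (e_ J - e_ G) * (v_ H - v_ G) < (e_ H - e_ G) * (v_ J - v_ G).
Proof.
move=> btwJ; have [_ [_ [iGH ltE]]] := rGH.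
have [leGJ _ leEGJ _] := strictly_between_card btwJ.
have ltGJ := strictly_between_verts_lt iGH btwJ.
have ltGH := rooted_graph_verts_lt rGH.
apply/ltP/INR_lt; rewrite !mult_INR.
apply: Rdiv_lt_cross; [exact: INR_subn_gt0 | exact: INR_subn_gt0 |].
by rewrite !INR_subn ?(ltnW ltE) ?(ltnW ltGH) //; exact: sbGH.
Qed.

Lemma strictly_balanced_rest_ltn J : strictly_between G J H ->
  (v_ H - v_ J) * (e_ H - e_ G) < (e_ H - e_ J) * (v_ H - v_ G).
Proof.
move=> btwJ; have := strictly_balanced_ltn btwJ.
have [leGJ leJH leEGJ leEJH] := strictly_between_card btwJ.
nia.
Qed.

Lemma balance_slack_gt0 : (0 < balance_slack G H)%R.
Proof.
have [_ [_ [_ /INR_subn_gt0 X0]]] := rGH.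
by apply: Rinv_0_lt_compat; have := pos_INR (e_ H); nra.
Qed.

Lemma strictly_balanced_term_le J (x q C : R) : strictly_between G J H ->
  (1 <= x)%R -> (0 <= q <= C * Rpower x (- / dens G H + balance_slack G H))%R ->
  (Rpower x (balance_slack G H) * (x ^ (v_ H - v_ J) * q ^ (e_ H - e_ J))
   <= Rmax 1 C ^ e_ H * Rpower x (- / (2 * INR (e_ H - e_ G))))%R.
Proof.
move=> btwJ x1 qC; have [_ [_ [_ ltE]]] := rGH; have ltV := rooted_graph_verts_lt rGH.
apply: Rpower_monomial_le qC _ _ => //; first exact: leq_subr.
have -> : dens G H = (INR (e_ H - e_ G) / INR (v_ H - v_ G))%R.
  by rewrite /dens !INR_subn // ltnW.
apply: exponent_le; rewrite ?subn_gt0 ?leq_subr //.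
exact: strictly_balanced_rest_ltn.
Qed.

Lemma strictly_balanced_no_separation (SA SB : {set T}) :
  SA :&: SB = verts G -> SA :|: SB = verts H ->
  (forall e, e \in edges H -> (e \subset SA) || (e \subset SB)) ->
  SA != verts G -> SB != verts G -> False.
Proof.
move=> capAB cupAB edgesAB nAG nBG; have [gH [gG [iGH _]]] := rGH.
have sGA : verts G \subset SA by rewrite -capAB subsetIl.
have sGB : verts G \subset SB by rewrite -capAB subsetIr.
have sAH : SA \subset verts H by rewrite -cupAB subsetUl.
have sBH : SB \subset verts H by rewrite -cupAB subsetUr.
have nAH : SA != verts H.
  by apply: contra_neq nBG => eAH; rewrite -capAB eAH; apply/esym/setIidPr.
have nBH : SB != verts H.
  by apply: contra_neq nAG => eBH; rewrite -capAB eBH; apply/esym/setIidPl.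
have btwA := induced_on_strictly_between gH gG iGH sGA sAH nAG nAH.
have btwB := induced_on_strictly_between gH gG iGH sGB sBH nBG nBH.
have vAB : v_ (induced_on H SA) + v_ (induced_on H SB) = v_ H + v_ G.
  by rewrite /v_ /= -cardsUI cupAB capAB.
have eAB : e_ (induced_on H SA) + e_ (induced_on H SB) = e_ H + e_ G.
  have cupE : edges (induced_on H SA) :|: edges (induced_on H SB) = edges H.
    apply/setP => e; rewrite /= !inE -andb_orr.
    by case eH: (e \in edges H) => //=; apply: edgesAB.
  by rewrite /e_ -cardsUI cupE induced_on_edgesI capAB (induced_subgraph_edges iGH).
have := strictly_balanced_ltn btwA; have := strictly_balanced_ltn btwB.
have := strictly_between_card btwA; have := strictly_between_card btwB.
set vA := v_ (induced_on H SA); set vB := v_ (induced_on H SB).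
set eA := e_ (induced_on H SA); set eB := e_ (induced_on H SB).
move=> [leGB _ leEGB _] [leGA _ leEGA _].
have -> : v_ H - v_ G = (vA - v_ G) + (vB - v_ G) by move: vAB leGA leGB; clear; lia.
have -> : e_ H - e_ G = (eA - e_ G) + (eB - e_ G) by move: eAB leEGA leEGB; clear; lia.
by move=> ltB ltA; apply: (mediant_lt_both_false ltA ltB).
Qed.

Lemma strictly_balanced_connected : connected_graph (delete_verts H (verts G)).
Proof.
have [gH [_ [iGH _]]] := rGH.
have sGH : verts G \subset verts H by case/andP: iGH.
set F := delete_verts H (verts G).
have inF z : (z \in verts F) = (z \notin verts G) && (z \in verts H) by rewrite inE.
split.
  rewrite setD_eq0; apply: contraL (rooted_graph_verts_lt rGH).
  by rewrite -leqNgt => /subset_leq_card.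
move=> x y xF yF; apply/negPn/negP => nxy.
pose A := [set z in verts F | connect (adj F) x z].
have inA z : z \in verts F -> (z \in A) = connect (adj F) x z.
  by move=> zF; rewrite in_set zF.
have adjA u w : adj F u w -> (u \in A) = (w \in A).
  have adj_sym : adj F u w -> adj F w u.
    by rewrite /adj setUC => /andP[/andP[-> ->] ->].
  move=> auw; have [/andP[uF wF] _] := andP auw.
  rewrite (inA u uF) (inA w wF); apply/idP/idP => [cxu | cxw].
    by apply: connect_trans cxu _; apply: connect1.
  by apply: connect_trans cxw _; apply/connect1/adj_sym.
have grow (S : {set T}) z : z \in S -> z \in verts F -> verts G :|: S != verts G.
  move=> zS; rewrite inF => /andP[zG _].
  by apply: contraNneq zG => <-; rewrite inE zS orbT.
apply: (strictly_balanced_no_separation (SA := verts G :|: A)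
                                        (SB := verts G :|: (verts F :\: A))).
- by rewrite -setUIr setDE setICA setICr setI0 setU0.
- apply/setP => z; rewrite !inE.
  case: (z \in verts G) (subsetP sGH z) => [-> // | _] /=.
  by case: (z \in verts H); case: (connect _ x z).
- exact: delete_verts_closed_split gH adjA.
- by apply: (grow _ x) => //; rewrite inA ?connect0.
- by apply: (grow _ y) => //; rewrite in_setD inA // nxy.
Qed.

End StrictlyBalanced.

Theorem lemma11 (T : finType) (G H : graph T) :
  rooted_graph G H -> strictly_balanced G H ->
  (exists beta : R, (0 < beta)%R /\
     forall p : nat -> R,
       (forall n, (0 <= p n <= 1)%R) ->
       bigO p (fun n => Rpower (INR n) (- / dens G H + beta)%R) ->
       Un_cv (fun n : nat =>
                (Rpower (INR n) beta *
                 \big[Rmax/0%R]_(J : graph T | strictly_between G J H)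
                    (INR n ^ (v_ H - v_ J) * p n ^ (e_ H - e_ J)))%R) 0%R)
  /\ connected_graph (delete_verts H (verts G)).
Proof.
move=> rGH sbGH; split; last exact: strictly_balanced_connected.
exists (balance_slack G H); split; first exact: balance_slack_gt0.
move=> p p01 [C [N pC]].
pose K := (Rmax 1 C ^ e_ H)%R.
have K0 : (0 <= K)%R by apply: pow_le; have := Rmax_l 1 C; lra.
apply: (@Un_cv_squeeze0 _ (fun n => K * Rpower (INR n) (- / (2 * INR (e_ H - e_ G))))%R
                        (maxn N 1)); last first.
  have [_ [_ [_ /INR_subn_gt0 X0]]] := rGH.
  by apply/Un_cv_scal0/Un_cv_Rpower_opp/Rinv_0_lt_compat; lra.
move=> n; rewrite geq_max => /andP[leNn n1].
have [p0 _] := p01 n.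
have x1 : (1 <= INR n)%R by apply/(le_INR 1)/leP.
have xbeta0 : (0 < Rpower (INR n) (balance_slack G H))%R by apply: exp_pos.
split.
  apply/Rmult_le_pos/bigRmax_ge0 => [|J _]; first lra.
  by apply/Rmult_le_pos; apply: pow_le; [apply: pos_INR |].
apply: Rmult_bigRmax_le => [|J btwJ].
  by apply: Rmult_le_pos => //; left; apply: exp_pos.
apply: strictly_balanced_term_le => //.
by split => //; rewrite -(Rabs_pos_eq _ p0); apply: pC.
Qed.
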